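(* Let $f\in K[X]$ be a regular polynomial with exactly $t+1$ nonzero monomial terms. Then the number of roots of $f$ in $K^\ast=K\setminus\{0\}$ is at most $t(q-1)$, and all roots of $f$ in $K^\ast$ are simple.
   Context: $K$ is a field complete with respect to a non-archimedean discrete valuation $v$, normalized by $v(\pi)=1$ for a uniformizer $\pi$ of the valuation ring $A=\{x\in K: v(x)\geq 0\}$; the residue field $\kappa=A/\pi A$ is finite with $q$ elements and characteristic $p$. For $h=\sum_{i=0}^d c_iX^i\in K[X]$, the Newton polygon of $h$ is the convex hull of the points $(i,v(c_i))$ with $c_i\neq 0$. An edge of a polygon in $\mathbb{R}^2$ is a lower edge if it has an inner normal vector with positive second coordinate. $h$ is regular if for every lower edge $S$ of its Newton polygon, with vertices $(s,v(c_s))$ and $(s',v(c_{s'}))$, $s>s'$: (1) $S$ contains exactly two points of the set $\{(i,v(c_i)) : 0\leq i\leq d,\ c_i\neq 0\}$; (2) $p\nmid (s-s')$. *)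

From HB Require Import structures.
From mathcomp Require Import all_boot all_order all_algebra.
Set Implicit Arguments. Unset Strict Implicit. Unset Printing Implicit Defensive.
Import Order.TTheory GRing.Theory Num.Theory.
Local Open Scope ring_scope.

(* The valuation v is only meaningful on nonzero elements (v 0 = +oo by
   convention); all conditions below treat 0 separately. *)

Definition vge (K : fieldType) (v : K -> int) (N : int) (x : K) : bool :=
  (x == 0) || (N <= v x).

Definition inA (K : fieldType) (v : K -> int) (x : K) : bool := vge v 0 x.
Definition inM (K : fieldType) (v : K -> int) (x : K) : bool := vge v 1 x.

Record complete_dvf (K : fieldType) (v : K -> int) (p q : nat) : Prop := {
  v_mul : forall x y : K, x != 0 -> y != 0 -> v (x * y) = v x + v y;
  v_add : forall x y : K, x != 0 -> y != 0 -> x + y != 0 ->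
            Num.min (v x) (v y) <= v (x + y);
  v_uniformizer : exists pi : K, pi != 0 /\ v pi = 1;
  v_complete : forall u : nat -> K,
      (forall N : int, exists M : nat, forall m n : nat,
          (M <= m)%N -> (M <= n)%N -> vge v N (u m - u n)) ->
      exists l : K, forall N : int, exists M : nat, forall n : nat,
          (M <= n)%N -> vge v N (u n - l);
  (* residue field has exactly q elements: a system of q pairwise
     incongruent representatives in A covering A modulo pi A *)
  residue_card : exists r : seq K,
      [/\ size r = q, all (inA v) r,
          pairwise (fun a b => ~~ inM v (a - b)) r
        & forall a : K, inA v a -> has (fun b => inM v (a - b)) r];
  residue_prime : prime p;
  residue_char : inM v (p%:R : K)
}.

(* Newton polygon: points (i, v c_i) for c_i != 0.  The point (i, v c_i)
   lies on or above the line through (s', v c_s') and (s, v c_s), s' < s. *)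
Definition on_or_above (K : fieldType) (v : K -> int) (f : {poly K})
    (s' s i : nat) : bool :=
  (v f`_s - v f`_s') * (i%:Z - s'%:Z) <= (v f`_i - v f`_s') * (s%:Z - s'%:Z).

Definition on_line (K : fieldType) (v : K -> int) (f : {poly K})
    (s' s i : nat) : bool :=
  (v f`_s - v f`_s') * (i%:Z - s'%:Z) == (v f`_i - v f`_s') * (s%:Z - s'%:Z).

(* A lower edge of the Newton polygon with vertices (s', v c_s'), (s, v c_s),
   s' < s: the line through them supports the convex hull from below (so its
   inner normal has positive second coordinate) and the face it cuts out is
   exactly the segment between these two points (they are its endpoints). *)
Definition lower_edge (K : fieldType) (v : K -> int) (f : {poly K})
    (s' s : nat) : Prop :=
  [/\ (s' < s)%N, f`_s' != 0, f`_s != 0,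
      forall i : nat, f`_i != 0 -> on_or_above v f s' s i
    & forall i : nat, f`_i != 0 -> on_line v f s' s i -> (s' <= i <= s)%N].

Definition regular (K : fieldType) (v : K -> int) (p : nat) (f : {poly K})
    : Prop :=
  forall s' s : nat, lower_edge v f s' s ->
    (forall i : nat, f`_i != 0 -> on_line v f s' s i -> i = s' \/ i = s)
    /\ ~~ (p %| s - s')%N.

From HB Require Import structures.
From mathcomp Require Import all_boot all_order all_algebra.
From mathcomp Require Import zify ring.
Set Implicit Arguments. Unset Strict Implicit. Unset Printing Implicit Defensive.
Import Order.TTheory GRing.Theory Num.Theory.
Local Open Scope ring_scope.

(* Let x be a nonzero root of f.  By the ultrametric inequality the minimum of v(c_i x^i) over
   the terms of f is attained at least twice, so it is attained along a lower edge of the Newton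
   polygon of slope -v(x); regularity says it is attained exactly at the two endpoints j < s of
   that edge and that p does not divide s - j.  Writing x f'(x) = sum_i i c_i x^i and using
   f(x) = 0, the term (s - j) c_s x^s is then strictly dominant, so f'(x) != 0.  The same estimate
   applied to y (f(x) - f(y)) / (x - y) shows that two roots on the same edge with
   v(x - y) > v(x) coincide, so the residues of x / x_0 on one edge are distinct and nonzero:
   at most q - 1 roots per edge.  An edge is determined by its left endpoint, which is one of the
   t nonzero coefficients below the leading one. *)

Section NewtonLine.

(* (J, a) and (S, b) lie on a line of slope -w; c + I w - (a + J w) measures how far (I, c) lies
   above it (up to the positive factor S - J in the cross-multiplied form of [on_or_above]). *)
Variables (a b w : int) (J S : nat).
Hypotheses (ab_line : b + S%:Z * w = a + J%:Z * w) (lt_JS : (J < S)%N).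

Lemma newton_line_identity c I :
  (c - a) * (S%:Z - J%:Z) - (b - a) * (I%:Z - J%:Z) =
  (c + I%:Z * w - (a + J%:Z * w)) * (S%:Z - J%:Z).
Proof.
have -> : b = a + J%:Z * w - S%:Z * w by rewrite -ab_line addrK.
ring.
Qed.

Lemma on_or_above_line c I : a + J%:Z * w <= c + I%:Z * w ->
  (b - a) * (I%:Z - J%:Z) <= (c - a) * (S%:Z - J%:Z).
Proof.
move=> le_line; rewrite -subr_ge0 newton_line_identity.
by apply: mulr_ge0; rewrite subr_ge0 // lez_nat ltnW.
Qed.

Lemma on_lineE c I :
  ((b - a) * (I%:Z - J%:Z) == (c - a) * (S%:Z - J%:Z)) =
  (c + I%:Z * w == a + J%:Z * w).
Proof.
rewrite eq_sym -subr_eq0 newton_line_identity mulf_eq0 !subr_eq0 eqz_nat.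
by rewrite gtn_eqF ?orbF.
Qed.

Lemma newton_line_slope w' :
  b + S%:Z * w' - (a + J%:Z * w') = (S%:Z - J%:Z) * (w' - w).
Proof.
have -> : b = a + J%:Z * w - S%:Z * w by rewrite -ab_line addrK.
ring.
Qed.

Lemma newton_line_slope_lt w' : a + J%:Z * w' < b + S%:Z * w' -> w < w'.
Proof.
by rewrite -subr_gt0 newton_line_slope pmulr_rgt0 ?subr_gt0 ?ltz_nat.
Qed.

Lemma newton_line_slope_eq w' : b + S%:Z * w' = a + J%:Z * w' -> w' = w.
Proof.
move/eqP; rewrite -subr_eq0 newton_line_slope mulf_eq0 !subr_eq0 eqz_nat.
by rewrite gtn_eqF //= => /eqP.
Qed.

End NewtonLine.

Lemma bigD2_ord (R : zmodType) n (F : nat -> R) j s :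
  (j < n)%N -> (s < n)%N -> j != s ->
  \sum_(i < n) F i = F j + F s + \sum_(i < n | (i != j :> nat) && (i != s :> nat)) F i.
Proof.
move=> lt_jn lt_sn neq_js.
rewrite (bigD1 (Ordinal lt_jn)) //= (bigD1 (Ordinal lt_sn)) /=; last first.
  by rewrite -(inj_eq val_inj) /= eq_sym.
by rewrite addrA; congr (_ + _); apply: eq_bigl.
Qed.

Lemma size_support_below_lead (R : nzRingType) (f : {poly R}) t :
  count (fun c => c != 0) f = t.+1 ->
  size [seq i <- iota 0 (size f).-1 | f`_i != 0] = t.
Proof.
move=> count_f; have f_neq0 : f != 0.
  by apply: contra_eqN count_f => /eqP ->; rewrite polyseq0.
move: count_f; rewrite -{1}(mkseq_nth 0 f) /mkseq count_map size_filter.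
have size_f : size f = (size f).-1.+1 by rewrite prednK // size_poly_gt0.
rewrite [in iota 0 (size f)]size_f -addn1 iotaD count_cat /=.
by rewrite -lead_coefE lead_coef_eq0 f_neq0 addn1 => -[].
Qed.

Lemma count_le_sum_count (T : eqType) (l : seq T) (S : seq nat) (P : T -> nat -> bool) :
  {in l, forall x, has (P x) S} ->
  (size l <= \sum_(j <- S) count (P^~ j) l)%N.
Proof.
elim: l => [|x l IH] hasP_l //=.
rewrite big_split /= -add1n; apply: leq_add.
  have /hasP [j j_in Pxj] := hasP_l x (mem_head _ _).
  by rewrite (big_rem j j_in) /= Pxj.
by apply: IH => y y_in; apply: hasP_l; rewrite inE y_in orbT.
Qed.

Section Valuation.

Variables (K : fieldType) (v : K -> int).
Hypothesis v_mulM : forall x y : K, x != 0 -> y != 0 -> v (x * y) = v x + v y.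
Hypothesis v_addD : forall x y : K, x != 0 -> y != 0 -> x + y != 0 ->
  Num.min (v x) (v y) <= v (x + y).

Lemma v1 : v 1 = 0.
Proof.
have := v_mulM (oner_neq0 K) (oner_neq0 K).
by rewrite mulr1 -{1}[v 1]addr0 => /addrI.
Qed.

Lemma vN x : x != 0 -> v (- x) = v x.
Proof.
have N1_neq0 : (-1 : K) != 0 by rewrite oppr_eq0 oner_neq0.
have vN1 : v (-1) = 0.
  by have := v_mulM N1_neq0 N1_neq0; rewrite mulrNN mulr1 v1; lia.
by move=> x_neq0; rewrite -mulN1r v_mulM // vN1 add0r.
Qed.

Lemma vX x n : x != 0 -> v (x ^+ n) = n%:Z * v x.
Proof.
move=> x_neq0; elim: n => [|n IH]; first by rewrite expr0 v1 mul0r.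
by rewrite exprS v_mulM ?expf_neq0 // IH; lia.
Qed.

Lemma vV x : x != 0 -> v x^-1 = - v x.
Proof.
by move=> x_neq0; have := v_mulM x_neq0 (invr_neq0 x_neq0); rewrite mulfV // v1; lia.
Qed.

Lemma vge0 N : vge v N 0.
Proof. by rewrite /vge eqxx. Qed.

Lemma vge_v x : vge v (v x) x.
Proof. by rewrite /vge lexx orbT. Qed.

Lemma vge_trans N M x : N <= M -> vge v M x -> vge v N x.
Proof. by rewrite /vge => le_NM /orP [-> //| /(le_trans le_NM) ->]; rewrite orbT. Qed.

Lemma vgeD N x y : vge v N x -> vge v N y -> vge v N (x + y).
Proof.
rewrite /vge; have [-> _|x_neq0] := eqVneq x 0; first by rewrite add0r.
have [-> |y_neq0] := eqVneq y 0; first by rewrite addr0 (negbTE x_neq0) => ? _.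
have [//|xy_neq0 /= le_Nx le_Ny] := eqVneq (x + y) 0.
by have := v_addD x_neq0 y_neq0 xy_neq0; rewrite ge_min => /orP [] /(le_trans _); apply.
Qed.

Lemma vgeN N x : vge v N x -> vge v N (- x).
Proof.
rewrite /vge; have [-> //|x_neq0] := eqVneq x 0; first by rewrite oppr0 eqxx.
by rewrite oppr_eq0 (negbTE x_neq0) vN.
Qed.

Lemma vgeB N x y : vge v N x -> vge v N y -> vge v N (x - y).
Proof. by move=> vx vy; apply: vgeD => //; apply: vgeN. Qed.

Lemma vgeM N M x y : vge v N x -> vge v M y -> vge v (N + M) (x * y).
Proof.
rewrite /vge; have [-> //|x_neq0] := eqVneq x 0; first by rewrite mul0r eqxx.
have [-> //|y_neq0] := eqVneq y 0; first by rewrite mulr0 eqxx.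
by rewrite mulf_eq0 (negbTE x_neq0) (negbTE y_neq0) v_mulM //=; apply: lerD.
Qed.

Lemma vgeX N x n : vge v N x -> vge v (n%:Z * N) (x ^+ n).
Proof.
move=> vx; elim: n => [|n IH]; first by rewrite expr0 mul0r -v1 vge_v.
by rewrite exprS -add1n PoszD mulrDl mul1r; apply: vgeM.
Qed.

Lemma vge_natr n : vge v 0 (n%:R : K).
Proof.
elim: n => [|n IH]; first exact: vge0.
by rewrite -addn1 natrD; apply: vgeD => //; rewrite -v1 vge_v.
Qed.

Lemma vge_sum (I : Type) (r : seq I) (P : pred I) (F : I -> K) N :
  (forall i, P i -> vge v N (F i)) -> vge v N (\sum_(i <- r | P i) F i).
Proof. by move=> vF; apply: (big_ind (vge v N)) => //; [apply: vge0 | apply: vgeD]. Qed.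

Lemma addr_dominant_neq0 a e : a != 0 -> vge v (v a + 1) e -> a + e != 0.
Proof.
move=> a_neq0 ve; apply: contraTneq ve => /(canRL (addKr a)); rewrite addr0 => ->.
by rewrite /vge oppr_eq0 (negbTE a_neq0) vN //= -ltzD1 ltxx.
Qed.

Lemma vge_subrX x y n : v x = v y -> vge v (v y + 1) (x - y) ->
  vge v (n%:Z * v y + 1) (x ^+ n - y ^+ n).
Proof.
move=> vxy vge_xy; elim: n => [|n IH]; first by rewrite !expr0 subrr vge0.
have -> : x ^+ n.+1 - y ^+ n.+1 = (x ^+ n - y ^+ n) * x + y ^+ n * (x - y).
  by rewrite !exprS; ring.
apply: vgeD.
  have -> : n.+1%:Z * v y + 1 = (n%:Z * v y + 1) + v x by rewrite vxy; lia.
  exact: vgeM (vge_v x).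
have -> : n.+1%:Z * v y + 1 = n%:Z * v y + (v y + 1) by lia.
exact: vgeM (vgeX _ (vge_v y)) vge_xy.
Qed.

Lemma vge_geometric_sum x y i : v x = v y -> vge v (v y + 1) (x - y) ->
  vge v (i%:Z * v y + 1)
    (y * (\sum_(k < i) x ^+ (i.-1 - k) * y ^+ k) - y ^+ i *+ i).
Proof.
move=> vxy vge_xy.
have -> : y ^+ i *+ i = \sum_(k < i) y ^+ i by rewrite sumr_const card_ord.
rewrite mulr_sumr -sumrB.
apply: vge_sum => k _; set m := (i.-1 - k)%N.
have i_split : (m + k.+1)%N = i by rewrite /m; have := ltn_ord k; lia.
have -> : y * (x ^+ m * y ^+ k) - y ^+ i = (x ^+ m - y ^+ m) * y ^+ k.+1.
  have -> : y ^+ i = y ^+ m * y ^+ k.+1 by rewrite -exprD i_split.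
  by rewrite exprS; ring.
have -> : i%:Z * v y + 1 = (m%:Z * v y + 1) + k.+1%:Z * v y.
  have -> : i%:Z = m%:Z + k.+1%:Z by rewrite -PoszD i_split.
  ring.
exact: vgeM (vge_subrX _ vxy vge_xy) (vgeX _ (vge_v y)).
Qed.

Section Residues.

Variable r : seq K.
Hypothesis r_cover : forall a, inA v a -> has (fun b => inM v (a - b)) r.

Lemma card_separated_units l : uniq l ->
  all (fun y => inA v y && ~~ inM v y) l ->
  {in l &, forall y1 y2, inM v (y1 - y2) -> y1 = y2} ->
  (size l <= (size r).-1)%N.
Proof.
move=> l_uniq /allP l_units l_sep.
pose rho a := find (fun b => inM v (a - b)) r.
have rhoP a : inA v a -> (rho a < size r)%N /\ inM v (a - r`_(rho a)).
  by move=> /r_cover r_a; rewrite -has_find; split; last exact: (nth_find 0 r_a).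
have rho_inj : {in l &, injective rho}.
  move=> y1 y2 y1_l y2_l rho_eq; apply: l_sep => //.
  have [_ y1P] := rhoP y1 (andP (l_units y1 y1_l)).1.
  have [_ y2P] := rhoP y2 (andP (l_units y2 y2_l)).1.
  by rewrite rho_eq in y1P; have := vgeB y1P y2P; rewrite opprB addrA subrK.
have [rho0_lt rho0P] := rhoP 0 (vge0 _).
have rho_sub : {subset map rho l <= rem (rho 0) (iota 0 (size r))}.
  move=> _ /mapP [y /l_units/andP [y_A y_nM] ->].
  rewrite (mem_rem_uniq _ (iota_uniq _ _)) inE /= mem_iota /=.
  have [-> yP] := rhoP y y_A; rewrite andbT.
  apply: contraNneq y_nM => rho_eq; rewrite rho_eq in yP.
  by have := vgeB yP rho0P; rewrite sub0r opprK subrK.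
have map_uniq : uniq (map rho l) by rewrite map_inj_in_uniq.
have := uniq_leq_size map_uniq rho_sub.
by rewrite size_map size_rem ?size_iota // mem_iota.
Qed.

Lemma card_sphere_separated x0 l : x0 != 0 -> uniq l ->
  {in l, forall y, y != 0 /\ v y = v x0} ->
  {in l &, forall y1 y2, vge v (v x0 + 1) (y1 - y2) -> y1 = y2} ->
  (size l <= (size r).-1)%N.
Proof.
move=> x0_neq0 l_uniq l_sphere l_sep.
rewrite -(size_map (fun y => y / x0)); apply: card_separated_units.
- by rewrite map_inj_uniq // => y1 y2; apply: mulIf; rewrite invr_neq0.
- apply/allP => _ /mapP [y /l_sphere [y_neq0 vy] ->].
  have vy0 : v (y / x0) = 0 by rewrite v_mulM ?invr_neq0 // vV // vy subrr.
  by rewrite /inA /inM /vge mulf_eq0 invr_eq0 (negbTE y_neq0) (negbTE x0_neq0) vy0.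
move=> _ _ /mapP [y1 y1_l ->] /mapP [y2 y2_l ->] vge_q.
congr (_ / x0); apply: l_sep => //.
have -> : y1 - y2 = x0 * (y1 / x0 - y2 / x0).
  by rewrite mulrBr !mulrA !(mulrC x0) -!mulrA mulfV // !mulr1.
exact: vgeM (vge_v x0) vge_q.
Qed.

End Residues.

Section ResidueChar.

Variable p : nat.
Hypotheses (p_prime : prime p) (p_char : inM v (p%:R : K)).

Lemma natr_unit n : ~~ (p %| n)%N -> (n%:R : K) != 0 /\ v n%:R = 0.
Proof.
move=> p_ndvd_n.
have n_nM : ~~ inM v (n%:R : K).
  apply: contraNN (oner_neq0 K) => n_M.
  have [a _] := Bezoutl n (prime_gt0 p_prime).
  rewrite (eqP (_ : coprime p n)) ?prime_coprime // => /dvdnP [k bezout].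
  have one_bezout : (1 : K) = k%:R * p%:R - a%:R * n%:R.
    by rewrite -!natrM -bezout natrD addrK.
  have : vge v 1 (1 : K).
    by rewrite one_bezout -[1]add0r; apply: vgeB; apply: vgeM => //; apply: vge_natr.
  by rewrite /vge v1 oner_eq0.
move: n_nM (vge_natr n); rewrite /inM /vge negb_or -ltNge => /andP [n_neq0 lt_v1].
by rewrite (negbTE n_neq0) /= => le_v0; split => //; lia.
Qed.

Section NewtonPolygon.

Variable f : {poly K}.

Definition term_val x i := v f`_i + i%:Z * v x.

(* The Newton polygon has an edge of slope [- v x] with endpoints j < s, and the terms of index
   j and s are the only ones of least valuation [term_val x j] at x. *)
Definition dominant_edge x j s : bool :=
  [&& (j < s)%N, f`_j != 0, f`_s != 0, term_val x j == term_val x s,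
      all (fun i => [|| f`_i == 0, i == j, i == s | term_val x j < term_val x i])
        (iota 0 (size f))
    & ~~ (p %| s - j)%N].

Lemma coef_lt_size i : f`_i != 0 -> (i < size f)%N.
Proof. by apply: contraR; rewrite -leqNgt => /leq_sizeP ->. Qed.

Lemma dominant_edge_lt x j s i : dominant_edge x j s -> f`_i != 0 -> i != j -> i != s ->
  term_val x j < term_val x i.
Proof.
case/and5P => _ _ _ _ /andP [/allP edge_min _] fi_neq0 i_neq_j i_neq_s.
have := edge_min i; rewrite mem_iota add0n coef_lt_size // => /(_ isT).
by rewrite (negbTE fi_neq0) (negbTE i_neq_j) (negbTE i_neq_s).
Qed.

Lemma dominant_edge_le x j s i : dominant_edge x j s -> f`_i != 0 ->
  term_val x j <= term_val x i.
Proof.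
move=> edge fi_neq0; have [-> //|i_neq_j] := eqVneq i j.
have [->|i_neq_s] := eqVneq i s; first by case/and5P: edge => _ _ _ /eqP ->.
exact/ltW/(dominant_edge_lt edge).
Qed.

Lemma v_term x i : x != 0 -> f`_i != 0 -> v (f`_i * x ^+ i) = term_val x i.
Proof. by move=> x_neq0 fi_neq0; rewrite v_mulM ?expf_neq0 // vX. Qed.

Lemma vge_term x i N : x != 0 -> (f`_i != 0 -> N <= term_val x i) ->
  vge v N (f`_i * x ^+ i).
Proof.
move=> x_neq0 le_N; have [->|fi_neq0] := eqVneq f`_i 0; first by rewrite mul0r vge0.
by apply: vge_trans (le_N fi_neq0) _; rewrite -v_term // vge_v.
Qed.

Lemma mul_horner_deriv x : x * (f^`()).[x] = \sum_(i < size f) (f`_i * x ^+ i) *+ i.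
Proof.
have [->|f_neq0] := eqVneq f 0; first by rewrite deriv0 horner0 mulr0 polyseq0 big_ord0.
move: (lt_size_deriv f_neq0); case: (size f) => [//|n] lt_n.
rewrite (horner_coef_wide x lt_n) big_ord_recl /= mulr0n add0r mulr_sumr.
by apply: eq_bigr => i _; rewrite coef_deriv mulrnAl mulrnAr mulrCA -exprS.
Qed.

(* Euler's trick: x f'(x) = sum_i i c_i x^i = (s - j) c_s x^s + j (c_j x^j + c_s x^s) + ...,
   and since f(x) = 0 the middle bracket equals minus the non-dominant terms. *)
Lemma dominant_edge_deriv x j s e : x != 0 -> root f x -> dominant_edge x j s ->
  vge v (term_val x j + 1) e -> x * (f^`()).[x] + e != 0.
Proof.
move=> x_neq0 fx0 edge vge_e.
have /and5P [lt_js fj_neq0 fs_neq0 /eqP val_js /andP [_ p_ndvd]] := edge.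
have lt_jf := coef_lt_size fj_neq0; have lt_sf := coef_lt_size fs_neq0.
have neq_js : j != s by rewrite ltn_eqF.
pose T i := f`_i * x ^+ i.
pose rest := \sum_(i < size f | (i != j :> nat) && (i != s :> nat)) T i.
pose rest_w := \sum_(i < size f | (i != j :> nat) && (i != s :> nat)) T i *+ i.
have vge_rest_term i : (i != j) && (i != s) -> vge v (term_val x j + 1) (T i).
  case/andP=> i_neq_j i_neq_s; apply: vge_term => // fi_neq0.
  by rewrite lezD1 (dominant_edge_lt edge).
have vge_rest : vge v (term_val x j + 1) rest by apply: vge_sum => i; apply: vge_rest_term.
have vge_rest_w : vge v (term_val x j + 1) rest_w.
  apply: vge_sum => i /vge_rest_term vT; rewrite -mulr_natr -[_ + 1]addr0.
  exact: vgeM vT (vge_natr _).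
have Tjs : T j + T s = - rest.
  by apply/eqP; rewrite -addr_eq0 -(bigD2_ord T lt_jf lt_sf neq_js) -horner_coef.
have [sj_neq0 v_sj] := natr_unit p_ndvd.
have dominant_neq0 : T s *+ (s - j) != 0.
  by rewrite -mulr_natr !mulf_neq0 ?expf_neq0.
have v_dominant : v (T s *+ (s - j)) = term_val x j.
  by rewrite -mulr_natr v_mulM ?mulf_neq0 ?expf_neq0 // v_sj addr0 v_term.
rewrite mul_horner_deriv (bigD2_ord (fun i => T i *+ i) lt_jf lt_sf neq_js) -/rest_w.
have -> : T j *+ j + T s *+ s = T s *+ (s - j) + (T j + T s) *+ j.
  by rewrite mulrnDl addrCA -mulrnDr subnK // ltnW.
rewrite Tjs -!addrA; apply: addr_dominant_neq0 => //; rewrite v_dominant.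
apply: vgeD; last exact: vgeD.
by rewrite -mulr_natr -[_ + 1]addr0; apply: vgeM (vgeN vge_rest) (vge_natr _).
Qed.

Lemma dominant_edge_mup x j s : f != 0 -> x != 0 -> root f x -> dominant_edge x j s ->
  mup x f = 1%N.
Proof.
move=> f_neq0 x_neq0 fx0 edge.
apply/eqP; rewrite eqn_leq mup_leq // -XsubC_dvd // dvdp_XsubCl fx0 andbT.
apply/negP => /dvdpP [g f_eq].
have f'x0 : (f^`()).[x] = 0.
  have -> : f^`() = ('X - x%:P) * (g^`() * ('X - x%:P) + g *+ 2).
    by rewrite f_eq derivM deriv_exp derivXsubC mul1r expr1 /=; ring.
  by rewrite hornerM hornerXsubC subrr mul0r.
by have := dominant_edge_deriv x_neq0 fx0 edge (vge0 _); rewrite f'x0 mulr0 addr0 eqxx.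
Qed.

(* If y is a root with a dominant edge and x a root with v (x - y) > v x = v y, then
   y (f(x) - f(y)) / (x - y) is a perturbation of y f'(y) of higher valuation. *)
Lemma dominant_edge_root_separated x y j s : y != 0 -> root f x -> root f y ->
  dominant_edge y j s -> v x = v y -> vge v (v y + 1) (x - y) -> x = y.
Proof.
move=> y_neq0 fx0 fy0 edge vxy vge_xy; apply/eqP/negPn/negP => x_neq_y.
pose H i := \sum_(k < i) x ^+ (i.-1 - k) * y ^+ k.
pose G := \sum_(i < size f) f`_i * H i.
pose E := \sum_(i < size f) f`_i * (y * H i - y ^+ i *+ i).
have G0 : G = 0.
  have : f.[x] - f.[y] = (x - y) * G.
    rewrite !horner_coef -sumrB mulr_sumr; apply: eq_bigr => i _.
    by rewrite -mulrBr subrXX mulrCA.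
  rewrite (eqP fx0) (eqP fy0) subrr => /esym/eqP.
  by rewrite mulf_eq0 subr_eq0 (negbTE x_neq_y) => /eqP.
have yG : y * G = y * (f^`()).[y] + E.
  rewrite mul_horner_deriv mulr_sumr -big_split /=; apply: eq_bigr => i _.
  by rewrite mulrBr -mulrnAr addrC subrK mulrCA.
have vge_E : vge v (term_val y j + 1) E.
  apply: vge_sum => i _; have [->|fi_neq0] := eqVneq f`_i 0; first by rewrite mul0r vge0.
  apply: (@vge_trans _ (v f`_i + (i%:Z * v y + 1))).
    by rewrite addrA lerD2r (dominant_edge_le edge).
  exact: vgeM (vge_v _) (vge_geometric_sum _ vxy vge_xy).
by have := dominant_edge_deriv y_neq0 fy0 edge vge_E; rewrite -yG G0 mulr0 eqxx.
Qed.

Lemma dominant_edge_v_eq x y j s1 s2 :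
  dominant_edge x j s1 -> dominant_edge y j s2 -> v x = v y.
Proof.
move=> edge_x edge_y.
have /and5P [lt_js1 _ fs1_neq0 /eqP val_x _] := edge_x.
have /and5P [lt_js2 _ fs2_neq0 /eqP val_y _] := edge_y.
have [eq_s|neq_s] := eqVneq s1 s2.
  by rewrite -eq_s in val_y; apply/esym/(newton_line_slope_eq (esym val_x) lt_js1).
have lt_x : term_val x j < term_val x s2.
  by apply: (dominant_edge_lt edge_x fs2_neq0 (negbT (gtn_eqF lt_js2))); rewrite eq_sym.
have lt_y := dominant_edge_lt edge_y fs1_neq0 (negbT (gtn_eqF lt_js1)) neq_s.
have := lt_trans (newton_line_slope_lt (esym val_y) lt_js2 lt_x).
by move=> /(_ _ (newton_line_slope_lt (esym val_x) lt_js1 lt_y)); rewrite ltxx.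
Qed.

Lemma exists_min_term_val x : f != 0 ->
  exists2 j0, f`_j0 != 0 & forall i, f`_i != 0 -> term_val x j0 <= term_val x i.
Proof.
move=> f_neq0; have lt_last : ((size f).-1 < size f)%N by rewrite ltn_predL size_poly_gt0.
have flast_neq0 : f`_(Ordinal lt_last) != 0 by rewrite -lead_coefE lead_coef_eq0.
have [j0 fj0_neq0 j0_min] := @arg_minP _ _ _ _ (fun i : 'I_(size f) => f`_i != 0)
  (fun i : 'I_(size f) => term_val x i) flast_neq0.
by exists j0 => // i fi_neq0; apply: (j0_min (Ordinal (coef_lt_size fi_neq0))).
Qed.

Lemma strict_min_term_nroot x j : x != 0 -> f`_j != 0 ->
  (forall i, f`_i != 0 -> i != j -> term_val x j < term_val x i) -> ~~ root f x.
Proof.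
move=> x_neq0 fj_neq0 j_min; have lt_jf := coef_lt_size fj_neq0.
rewrite /root horner_coef (bigD1 (Ordinal lt_jf)) //=.
apply: addr_dominant_neq0; first by rewrite mulf_neq0 ?expf_neq0.
rewrite v_term //; apply: vge_sum => i; rewrite -(inj_eq val_inj) /= => i_neq_j.
by apply: vge_term => // fi_neq0; rewrite lezD1 j_min.
Qed.

Lemma on_line_term_val x j s i : (j < s)%N -> term_val x j = term_val x s ->
  on_line v f j s i = (term_val x i == term_val x j).
Proof. by move=> lt_js val_js; rewrite /on_line (on_lineE (esym val_js)). Qed.

Lemma min_term_val_lower_edge x j s : (j < s)%N -> f`_j != 0 -> f`_s != 0 ->
  term_val x j = term_val x s ->
  (forall i, f`_i != 0 -> term_val x j <= term_val x i) ->
  (forall i, f`_i != 0 -> term_val x i = term_val x j -> (j <= i <= s)%N) ->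
  lower_edge v f j s.
Proof.
move=> lt_js fj_neq0 fs_neq0 val_js j_min min_between.
split => // i fi_neq0.
  exact: (on_or_above_line (esym val_js) lt_js (j_min i fi_neq0)).
by rewrite (on_line_term_val _ lt_js val_js) => /eqP; apply: min_between.
Qed.

Hypothesis f_regular : regular v p f.

Lemma exists_dominant_edge x : f != 0 -> x != 0 -> root f x ->
  exists j s, dominant_edge x j s.
Proof.
move=> f_neq0 x_neq0 fx0.
have [j0 fj0_neq0 j0_min] := exists_min_term_val x f_neq0.
pose P i := (f`_i != 0) && (term_val x i == term_val x j0).
have exP : exists i, P i by exists j0; rewrite /P fj0_neq0 eqxx.
have P_bound i : P i -> (i <= size f)%N by case/andP=> /coef_lt_size /ltnW.
case: (ex_minnP exP) => j /andP [fj_neq0 /eqP val_j] j_first.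
case: (ex_maxnP exP P_bound) => s /andP [fs_neq0 /eqP val_s] s_last.
have min_between i : f`_i != 0 -> term_val x i = term_val x j -> (j <= i <= s)%N.
  move=> fi_neq0 val_i; have Pi : P i by rewrite /P fi_neq0 val_i val_j eqxx.
  by rewrite j_first ?s_last.
have j_min i : f`_i != 0 -> term_val x j <= term_val x i by move=> /j0_min; rewrite val_j.
have lt_js : (j < s)%N.
  rewrite ltn_neqAle s_last ?andbT; last by rewrite /P fj_neq0 val_j eqxx.
  apply: contraTneq fx0 => eq_js; apply: strict_min_term_nroot x_neq0 fj_neq0 _ => i fi_neq0.
  rewrite lt_neqAle j_min // andbT; apply: contra => /eqP/esym/(min_between _ fi_neq0).
  by rewrite -eq_js -eqn_leq eq_sym.
have val_js : term_val x j = term_val x s by rewrite val_j val_s.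
have edge := min_term_val_lower_edge lt_js fj_neq0 fs_neq0 val_js j_min min_between.
have [only_ends p_ndvd] := f_regular edge.
exists j, s; rewrite /dominant_edge lt_js fj_neq0 fs_neq0 -val_js eqxx p_ndvd andbT /=.
apply/allP => i _; have [//|fi_neq0 /=] := eqVneq f`_i 0.
rewrite lt_neqAle j_min // andbT.
have [/eqP val_i|_] := boolP (term_val x j == term_val x i); last by rewrite !orbT.
have := only_ends i fi_neq0; rewrite (on_line_term_val _ lt_js val_js) val_i eqxx.
by case=> // ->; rewrite eqxx ?orbT.
Qed.

Section Counting.

Variable r : seq K.
Hypothesis r_cover : forall a, inA v a -> has (fun b => inM v (a - b)) r.

Definition edge_key x j := has (dominant_edge x j) (iota 0 (size f)).

Lemma card_roots_edge_key j l : uniq l ->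
  {in l, forall y, [/\ y != 0, root f y & edge_key y j]} -> (size l <= (size r).-1)%N.
Proof.
case: l => [//|x0 l'] l_uniq l_roots.
have [x0_neq0 _ /hasP [s0 _ edge0]] := l_roots x0 (mem_head _ _).
apply: (card_sphere_separated r_cover x0_neq0 l_uniq).
  move=> y /l_roots [y_neq0 _ /hasP [s _ edge]].
  by split => //; apply: dominant_edge_v_eq edge edge0.
move=> y1 y2 /l_roots [_ fy1 /hasP [s1 _ edge1]] /l_roots [y2_neq0 fy2 /hasP [s2 _ edge2]].
have v_y2 := dominant_edge_v_eq edge2 edge0.
rewrite -v_y2; apply: (dominant_edge_root_separated y2_neq0 fy1 fy2 edge2).
exact: dominant_edge_v_eq edge1 edge2.
Qed.

Lemma count_nonzero_roots t (l : seq K) : count (fun c : K => c != 0) f = t.+1 ->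
  uniq l -> all (fun x => (x != 0) && root f x) l ->
  (size l <= t * (size r).-1)%N.
Proof.
move=> count_f l_uniq /allP l_roots.
have f_neq0 : f != 0 by apply: contra_eqN count_f => /eqP ->; rewrite polyseq0.
pose S := [seq i <- iota 0 (size f).-1 | f`_i != 0].
apply: (@leq_trans (\sum_(j <- S) count (edge_key^~ j) l)).
  apply: count_le_sum_count => x /l_roots /andP [x_neq0 fx0].
  have [j [s edge]] := exists_dominant_edge f_neq0 x_neq0 fx0.
  have /and5P [lt_js fj_neq0 fs_neq0 _ _] := edge.
  have lt_sf := coef_lt_size fs_neq0.
  apply/hasP; exists j; last by apply/hasP; exists s; rewrite // mem_iota.
  rewrite mem_filter fj_neq0 mem_iota /= (leq_trans lt_js) //.
  by rewrite -ltnS prednK // size_poly_gt0.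
apply: (@leq_trans (\sum_(j <- S) (size r).-1)).
  apply: leq_sum => j _; rewrite -size_filter.
  apply: (card_roots_edge_key (j := j)); first exact: filter_uniq.
  by move=> y; rewrite mem_filter => /andP [key_y /l_roots /andP [-> ->]].
by rewrite big_const_seq count_predT iter_addn_0 mulnC (size_support_below_lead count_f).
Qed.

End Counting.
End NewtonPolygon.
End ResidueChar.
End Valuation.

Unset Implicit Arguments.

Theorem corollary4p7 (K : fieldType) (v : K -> int) (p q : nat)
    (HK : complete_dvf v p q) (f : {poly K}) (t : nat)
    (Hreg : regular v p f)
    (Hterms : count (fun c : K => c != 0) (polyseq f) = t.+1) :
  (forall s : seq K, uniq s -> all (fun x => (x != 0) && root f x) s ->
     (size s <= t * (q - 1))%N)
  /\ (forall x : K, x != 0 -> root f x -> mup x f = 1%N).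
Proof.
have f_neq0 : f != 0 by apply: contra_eqN Hterms => /eqP ->; rewrite polyseq0.
have [v_mulM v_addD] := (v_mul HK, v_add HK).
have [p_prime p_char] := (residue_prime HK, residue_char HK).
split=> [s s_uniq s_roots | x x_neq0 fx0].
  have [r [<- _ _ r_cover]] := residue_card HK; rewrite subn1.
  exact: (count_nonzero_roots v_mulM v_addD p_prime p_char Hreg r_cover Hterms s_uniq s_roots).
have [j [s edge]] := exists_dominant_edge v_mulM v_addD Hreg f_neq0 x_neq0 fx0.
exact: (dominant_edge_mup v_mulM v_addD p_prime p_char f_neq0 x_neq0 fx0 edge).
Qed.
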